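(* Consider the discrete all-pay auction in the model with ties with $n\in\{2,3\}$ bidders whose values are drawn independently and uniformly from $X=\{0,1,\dots,x\}$, $x\ge10$. Let $\beta$ be a symmetric equilibrium bidding function. Then $\beta(x-1)\le\beta(x-2)+1$ and $\beta(x)\le\beta(x-1)+1$.
   Context: Model. There are $n$ risk-neutral bidders competing for one indivisible object. Values and bids lie in $X=\{0,1,2,\dots,x\}$. Each bidder privately learns a value drawn independently and uniformly from $X$. Each bidder submits a bid in $X$. A (pure) strategy is a bidding function $\beta:X\to X$. In the model with ties, if $m$ bidders submit the highest bid, each of them wins with probability $1/m$. In the all-pay auction, a bidder with value $v_i$ bidding $b_i$ gets expected payoff $v_i\Pr(i\text{ wins})-b_i$ (everyone pays their bid). An equilibrium is a profile of bidding functions such that each bidder's bidding function maximises their expected payoff given the others' bidding functions (a pure-strategy Bayes–Nash equilibrium) and such that no bidder uses a weakly dominated bidding function (a bidding function is weakly dominated if some other bidding function yields at least as high expected payoff against every profile of opponents' bidding functions, and strictly higher against some). A symmetric equilibrium is an equilibrium in which all bidders use the same bidding function. *)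

From mathcomp Require Import all_boot all_order all_algebra.
Set Implicit Arguments. Unset Strict Implicit. Unset Printing Implicit Defensive.
Import Order.TTheory GRing.Theory Num.Theory.
Local Open Scope ring_scope.

(* Values and bids lie in X = {0,...,x}, represented by 'I_x.+1. *)
Definition bidfun (x : nat) := 'I_x.+1 -> 'I_x.+1.

Definition winprob (b : nat) (bs : seq nat) : rat :=
  if all (fun c => (c <= b)%N) bs
  then (1 + (count (pred1 b) bs)%:R)^-1 else 0.

(* Interim expected payoff of a bidder with value v bidding b in the all-pay
   auction, against m opponents using bidding functions ops, opponents'
   values i.i.d. uniform on X. *)
Definition interim_payoff (x m : nat) (ops : 'I_m -> bidfun x)
    (v b : 'I_x.+1) : rat :=
  \sum_(w : {ffun 'I_m -> 'I_x.+1})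
     ((x.+1)%:R^-1) ^+ m *
     ((v : nat)%:R * winprob b [seq (ops j (w j) : nat) | j <- enum 'I_m]
      - (b : nat)%:R).

Definition payoff (x m : nat) (ops : 'I_m -> bidfun x) (s : bidfun x) : rat :=
  \sum_(v : 'I_x.+1) (x.+1)%:R^-1 * interim_payoff ops v (s v).

(* Weak dominance (m = number of opponents). *)
Definition weakly_dominated (x m : nat) (s : bidfun x) : Prop :=
  exists s' : bidfun x,
    (forall ops : 'I_m -> bidfun x, payoff ops s <= payoff ops s') /\
    (exists ops : 'I_m -> bidfun x, payoff ops s < payoff ops s').

Definition symmetric_equilibrium (n x : nat) (beta : bidfun x) : Prop :=
  (forall s : bidfun x,
      payoff (fun _ : 'I_n.-1 => beta) s <= payoff (fun _ : 'I_n.-1 => beta) beta)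
  /\ ~ weakly_dominated n.-1 beta.

From mathcomp Require Import all_boot all_order all_algebra.
From mathcomp Require Import ring lra zify.
Set Implicit Arguments. Unset Strict Implicit. Unset Printing Implicit Defensive.
Import Order.TTheory GRing.Theory Num.Theory.
Local Open Scope ring_scope.

(* Bid gaps at the top of a symmetric equilibrium of the discrete all-pay
   auction.

   From the best-response property
   we get interim optimality, monotonicity of [beta], and the key
   "undercutting" lemma: a bid [b+1] with nobody at [b] and few values at
   [b+1] can profitably be lowered by one.  A gap of two or more just below
   the highest (resp. second highest) value creates exactly this situation;
   for two opponents one also needs that the two highest values never tie. *)

Lemma share_gt0 (k : nat) : 0 < (1 + k%:R : rat).
Proof. by rewrite ltr_wpDr. Qed.

Lemma share_le1 (k : nat) : (1 + k%:R : rat)^-1 <= 1.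
Proof. by rewrite invf_le1 ?share_gt0 // lerDl. Qed.

Lemma share_le_half (k : nat) : (0 < k)%N -> (1 + k%:R : rat)^-1 <= 2^-1.
Proof.
move=> k_gt0; rewrite lef_pV2 ?posrE ?share_gt0 //.
have : (1 : rat) <= k%:R by rewrite ler1n.
lra.
Qed.

Lemma winprob_ge0 b bs : 0 <= winprob b bs.
Proof. by rewrite /winprob; case: ifP => // _; rewrite invr_ge0 ltW ?share_gt0. Qed.

Lemma winprob_le1 b bs : winprob b bs <= 1.
Proof. by rewrite /winprob; case: ifP => // _; exact: share_le1. Qed.

Lemma winprob_top c bs : all (fun a => (a <= c)%N) bs -> winprob c.+1 bs = 1.
Proof.
move=> /allP bs_le; rewrite /winprob.
have -> : all (fun a => (a <= c.+1)%N) bs by apply/allP => a /bs_le /leqW.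
have /count_memPn -> : c.+1 \notin bs by apply/negP => /bs_le; rewrite ltnn.
by rewrite addr0 invr1.
Qed.

Lemma winprob_mono b bs : winprob b bs <= winprob b.+1 bs.
Proof.
rewrite {1}/winprob; case: ifP => [bs_le|_]; last exact: winprob_ge0.
by rewrite winprob_top // share_le1.
Qed.

Lemma winprob_tie c bs : winprob c bs <= 1 - (c \in bs)%:R / 2.
Proof.
case: (boolP (c \in bs)) => [c_in|_]; last by rewrite subr0 winprob_le1.
rewrite /winprob /=; case: ifP => _; last by lra.
have : (0 < count_mem c bs)%N by rewrite -has_count has_pred1.
move=> /share_le_half; lra.
Qed.

Lemma winprob_step b bs : b \notin bs ->
  winprob b.+1 bs - winprob b bs <= (b.+1 \in bs)%:R / 2.
Proof.
move=> b_notin; case: (boolP (b.+1 \in bs)) => [Sb_in|Sb_notin] /=.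
  have -> : winprob b bs = 0.
    by rewrite /winprob; case: ifP => // /allP /(_ _ Sb_in); rewrite ltnn.
  rewrite subr0 /winprob; case: ifP => _; last by lra.
  have : (0 < count_mem b.+1 bs)%N by rewrite -has_count has_pred1.
  move=> /share_le_half; lra.
suff -> : winprob b.+1 bs = winprob b bs by rewrite subrr.
rewrite /winprob (count_memPn Sb_notin) (count_memPn b_notin).
congr (if _ then _ else _); apply: eq_in_all => a a_in.
by rewrite leq_eqVlt ltnS; case: eqP => // a_eq; move: Sb_notin; rewrite -a_eq a_in.
Qed.

Section UniformProfiles.
(* Expectations over the values of [m] opponents, drawn i.i.d. uniformly
   from X = {0,...,x}; a value profile is a finite function 'I_m -> X. *)
Variables x m : nat.

Definition unif : rat := (x.+1)%:R^-1.

Definition expect (F : {ffun 'I_m -> 'I_x.+1} -> rat) : rat :=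
  \sum_w unif ^+ m * F w.

Lemma unif_gt0 : 0 < unif.
Proof. by rewrite invr_gt0 ltr0n. Qed.

Lemma sum_unif : \sum_(v : 'I_x.+1) unif = 1.
Proof. by rewrite sumr_const card_ord -mulr_natl mulfV ?pnatr_eq0. Qed.

Lemma value_unif_lt1 (v : nat) : (v <= x)%N -> v%:R * unif < 1.
Proof. by move=> v_le; rewrite ltr_pdivrMr ?ltr0n // mul1r ltr_nat ltnS. Qed.

Lemma sum_unif_indicator (P : pred 'I_x.+1) :
  \sum_v unif * (P v)%:R = #|P|%:R * unif.
Proof.
rewrite -mulr_sumr mulrC -sum1_card natr_sum; congr (_ * _).
by rewrite [RHS]big_mkcond; apply: eq_bigr => v _; rewrite unfold_in; case: (P v).
Qed.

Lemma expect_cst c : expect (fun=> c) = c.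
Proof.
rewrite /expect -mulr_suml sumr_const card_ffun !card_ord -mulr_natl natrX.
by rewrite -exprMn mulfV ?pnatr_eq0 // expr1n mul1r.
Qed.

Lemma expect_le F G : (forall w, F w <= G w) -> expect F <= expect G.
Proof.
move=> FG; apply: ler_sum => w _.
by rewrite ler_wpM2l ?exprn_ge0 ?(ltW unif_gt0).
Qed.

Lemma expectD F G : expect (fun w => F w + G w) = expect F + expect G.
Proof. by rewrite /expect -big_split; apply: eq_bigr => w _; rewrite mulrDr. Qed.

Lemma expectB F G : expect (fun w => F w - G w) = expect F - expect G.
Proof. by rewrite /expect -sumrB; apply: eq_bigr => w _; rewrite mulrBr. Qed.

Lemma expectZ a F : expect (fun w => a * F w) = a * expect F.
Proof. by rewrite /expect mulr_sumr; apply: eq_bigr => w _; rewrite mulrCA. Qed.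

Lemma expect_prod (f : 'I_m -> 'I_x.+1 -> rat) :
  expect (fun w => \prod_i f i (w i)) = \prod_i \sum_v unif * f i v.
Proof.
rewrite bigA_distr_bigA /expect; apply: eq_bigr => w _.
by rewrite big_split /= prodr_const card_ord.
Qed.

Lemma expect_iid (g : 'I_x.+1 -> rat) :
  expect (fun w => \prod_i g (w i)) = (\sum_v unif * g v) ^+ m.
Proof. by rewrite (expect_prod (fun=> g)) prodr_const card_ord. Qed.

Lemma expect_coord j (g : 'I_x.+1 -> rat) :
  expect (fun w => g (w j)) = \sum_v unif * g v.
Proof.
pose f i := if i == j then g else fun=> 1.
transitivity (expect (fun w => \prod_i f i (w i))).
  apply: eq_bigr => w _; rewrite (bigD1 j) //= big1 ?mulr1 /f ?eqxx //.
  by move=> i /negbTE ->.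
rewrite expect_prod (bigD1 j) //= /f eqxx [X in _ * X]big1 ?mulr1 // => i /negbTE ->.
by under eq_bigr do rewrite mulr1; exact: sum_unif.
Qed.

Lemma expect_sum_coord (g : 'I_x.+1 -> rat) :
  expect (fun w => \sum_j g (w j)) = m%:R * \sum_v unif * g v.
Proof.
transitivity (\sum_(j : 'I_m) expect (fun w => g (w j))).
  by rewrite /expect exchange_big /=; apply: eq_bigr => w _; rewrite mulr_sumr.
by under eq_bigr do rewrite expect_coord; rewrite sumr_const card_ord mulr_natl.
Qed.

End UniformProfiles.

Section Winning.
Variables x m : nat.
Variable beta : bidfun x.

Definition bids (w : {ffun 'I_m -> 'I_x.+1}) : seq nat :=
  [seq (beta (w j) : nat) | j <- enum 'I_m].

Definition win (b : nat) : rat := expect (fun w => winprob b (bids w)).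

Lemma interim_payoffE (v b : 'I_x.+1) :
  interim_payoff (fun _ : 'I_m => beta) v b = (v : nat)%:R * win b - (b : nat)%:R.
Proof. by rewrite /win -expectZ -[(b : nat)%:R](@expect_cst x m) -expectB. Qed.

Lemma win_ge0 (b : nat) : 0 <= win b.
Proof. by rewrite -(@expect_cst x m 0); apply: expect_le => w; exact: winprob_ge0. Qed.

Lemma win_mono (b b' : nat) : (b <= b')%N -> win b <= win b'.
Proof.
move=> /subnK <-; elim: (b' - b)%N => [|k IH] //.
by apply: le_trans IH _; apply: expect_le => w; exact: winprob_mono.
Qed.

Lemma win_top (c : nat) : (forall v, (beta v <= c)%N) -> win c.+1 = 1.
Proof.
move=> beta_le; rewrite -(@expect_cst x m 1); apply: eq_bigr => w _.
by rewrite winprob_top //; apply/allP => a /mapP [j _ ->].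
Qed.

Lemma mem_bids_le_count (c : nat) w :
  (c \in bids w)%:R <= \sum_j ((beta (w j) : nat) == c)%:R :> rat.
Proof.
case: (boolP (c \in bids w)) => [/mapP [j _ ->]|_]; last exact: sumr_ge0.
by rewrite (bigD1 j) //= eqxx lerDl sumr_ge0.
Qed.

Lemma notin_bids (c : nat) w :
  (c \notin bids w)%:R = \prod_j ((beta (w j) : nat) != c)%:R :> rat.
Proof.
case: (boolP (c \in bids w)) => [/mapP [j _ ->]|c_notin] /=.
  by rewrite (bigD1 j) //= eqxx mul0r.
rewrite big1 // => j _; case: eqP => //= bj; move: c_notin.
by rewrite -bj /bids (map_f (fun i => beta (w i) : nat)) ?mem_enum.
Qed.

(* If nobody bids [b], bidding [b+1] instead of [b] gains at most half the
   probability that an opponent bids [b+1]; by the union bound this is at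
   most [m/2] times the probability that a single opponent bids [b+1]. *)
Lemma win_step (b : nat) : (forall v, (beta v : nat) != b) ->
  win b.+1 - win b <= (m * #|[pred v | (beta v : nat) == b.+1]|)%:R * unif x / 2.
Proof.
move=> no_b; rewrite /win -expectB.
apply: le_trans (_ : expect (fun w => 2^-1 * \sum_j ((beta (w j) : nat) == b.+1)%:R) <= _).
  apply: expect_le => w; apply: le_trans (winprob_step _) _.
    by apply/mapP => -[j _ /eqP]; rewrite eq_sym (negbTE (no_b _)).
  by rewrite mulrC ler_pM2l ?invr_gt0 // mem_bids_le_count.
rewrite expectZ (@expect_sum_coord x m (fun v => ((beta v : nat) == b.+1)%:R)).
rewrite (sum_unif_indicator [pred v | (beta v : nat) == b.+1]).
by rewrite natrM mulrC !mulrA.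
Qed.

(* A bid [c] wins with probability at most 1/2 unless no opponent bids [c],
   which happens with probability (Pr[beta v != c])^m. *)
Lemma win_tie (c : nat) :
  win c <= (1 + (#|[pred v | (beta v : nat) != c]|%:R * unif x) ^+ m) / 2.
Proof.
apply: le_trans (_ : expect (fun w =>
    2^-1 * (1 + \prod_j ((beta (w j) : nat) != c)%:R)) <= _).
  apply: expect_le => w; rewrite -notin_bids.
  by have := winprob_tie c (bids w); case: (c \in bids w) => /=; lra.
rewrite expectZ expectD expect_cst (@expect_iid x m (fun v => ((beta v : nat) != c)%:R)).
by rewrite (sum_unif_indicator [pred v | (beta v : nat) != c]) mulrC.
Qed.

End Winning.

Lemma ord_le_pred x k (u : 'I_x.+1) :
  (k <= x)%N -> (u <= k)%N -> u != inord k -> (u <= k.-1)%N.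
Proof.
move=> k_le u_le u_ne; have : (u : nat) != k.
  by apply: contra u_ne => /eqP u_k; apply/eqP/val_inj; rewrite /= inordK // ltnS.
by move: u_le; clear; lia.
Qed.

Lemma card_other_bids x (T : eqType) (f : 'I_x.+1 -> T) (u u' : 'I_x.+1) :
  u != u' -> f u = f u' -> (#|[pred w | f w != f u]| < x)%N.
Proof.
move=> u_ne tie.
have sub : [set u; u'] \subset [pred w | f w == f u].
  by apply/subsetP => w; rewrite !inE => /orP [] /eqP ->; rewrite ?tie.
have compl : #|[predC [pred w | f w == f u]]| = #|[pred w | f w != f u]|.
  by apply: eq_card => w; rewrite !inE.
have := subset_leq_card sub; rewrite cards2 u_ne.
have := cardC [pred w | f w == f u]; rewrite card_ord compl.
by move: #|[pred w | f w == f u]| #|[pred w | f w != f u]| => A B; lia.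
Qed.

Lemma single_crossing_arith (v v' b b' p p' : rat) :
  0 <= v -> v + 1 <= v' -> b' + 1 <= b -> p' <= p ->
  v * p' - b' <= v * p - b -> v' * p - b <= v' * p' - b' -> False.
Proof.
move=> v_ge0 lt_v lt_b le_p opt_v opt_v'.
have : 0 <= (v' - v - 1) * (p - p') by apply: mulr_ge0; lra.
nra.
Qed.

Lemma top_tie_arith (X u : rat) :
  3 <= X -> u * (X + 1) = 1 -> X * (1 - ((X - 1) * u) ^+ 2) <= 2 -> False.
Proof.
move=> X_ge3 uX bound.
have Xu : X * u = 1 - u by lra.
have u_le : u <= 4^-1 by nra.
have : X * (1 - ((X - 1) * u) ^+ 2) = 4 * (1 - u) ^+ 2.
  have -> : 1 - ((X - 1) * u) ^+ 2 = 4 * u * (1 - u).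
    by transitivity (1 - (X * u - u) ^+ 2); [ring | rewrite Xu; ring].
  by transitivity (4 * (X * u) * (1 - u)); [ring | rewrite Xu; ring].
nra.
Qed.

Section Equilibrium.
Variables x m : nat.
Variable beta : bidfun x.

Definition best_response : Prop := forall s : bidfun x,
  payoff (fun _ : 'I_m => beta) s <= payoff (fun _ : 'I_m => beta) beta.

Hypothesis beta_br : best_response.

Notation win := (win m beta).

(* Ex-ante optimality forces interim optimality: otherwise changing the bid
   of a single value [v] would raise the ex-ante payoff. *)
Lemma interim_optimal (v b : 'I_x.+1) :
  (v : nat)%:R * win b - (b : nat)%:R <=
  (v : nat)%:R * win (beta v) - (beta v : nat)%:R.
Proof.
have := beta_br (fun u => if u == v then b else beta u).
rewrite /payoff (bigD1 v) // [in X in _ <= X -> _](bigD1 v) //= eqxx.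
under eq_bigr => u /negbTE -> do [].
by rewrite lerD2r ler_pM2l ?unif_gt0 // -!interim_payoffE.
Qed.

Lemma beta_mono (v v' : 'I_x.+1) : (v <= v')%N -> (beta v <= beta v')%N.
Proof.
move=> le_v; rewrite leqNgt; apply/negP => lt_b.
have lt_v : (v < v')%N.
  by rewrite ltn_neqAle le_v andbT; apply: contraTneq lt_b => /val_inj ->; rewrite ltnn.
have le_win := win_mono m beta (ltnW lt_b).
move: lt_v lt_b; rewrite -!(ler_nat rat) -!natr1 => lt_v lt_b.
exact: (single_crossing_arith (ler0n _ _) lt_v lt_b le_win
          (interim_optimal v (beta v')) (interim_optimal v' (beta v))).
Qed.

Lemma bid_below (k : nat) (u : 'I_x.+1) :
  (k <= x)%N -> (u <= k)%N -> (beta u <= beta (inord k))%N.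
Proof. by move=> k_le u_le; apply: beta_mono; rewrite inordK // ltnS. Qed.

(* Undercutting: if a value bids [b+1], nobody bids [b], and at most
   [2/m] values bid [b+1], then bidding [b] instead saves 1 while losing
   at most [v/(x+1) < 1] in expected prize, contradicting optimality. *)
Lemma undercut (v : 'I_x.+1) (b : nat) :
  (beta v : nat) = b.+1 -> (forall u, (beta u : nat) != b) ->
  (m * #|[pred u | (beta u : nat) == b.+1]| <= 2)%N -> False.
Proof.
move=> bid_v no_b few.
have b_lt : (b < x.+1)%N by apply: ltnW; rewrite -bid_v ltn_ord.
have := interim_optimal v (Ordinal b_lt); rewrite /= bid_v -natr1 => opt.
have gain : 1 <= (v : nat)%:R * (win b.+1 - win b) by rewrite mulrBr; lra.
have loss : win b.+1 - win b <= unif x.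
  apply: le_trans (win_step m no_b) _.
  have : (m * #|[pred u | (beta u : nat) == b.+1]|)%:R <= 2 :> rat.
    by rewrite (ler_nat _ _ 2).
  by have := unif_gt0 x; nra.
have := value_unif_lt1 (leq_ord v).
have : (v : nat)%:R * (win b.+1 - win b) <= (v : nat)%:R * unif x.
  by rewrite ler_wpM2l.
lra.
Qed.

(* A value whose bid is the highest bid of all loses with probability at
   most [1/v]: otherwise outbidding everybody (or bidding 0) pays more. *)
Lemma top_bidder (v : 'I_x.+1) :
  (forall u, (beta u <= beta v)%N) -> (v : nat)%:R * (1 - win (beta v)) <= 1.
Proof.
move=> beta_le; case: (ltnP (beta v) x) => [lt_x | ge_x].
  have Sc_lt : ((beta v).+1 < x.+1)%N by rewrite ltnS.
  have := interim_optimal v (Ordinal Sc_lt); rewrite /= (win_top m beta_le) -natr1.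
  by rewrite mulrBr; lra.
have := interim_optimal v ord0; rewrite /= subr0 mulrBr => opt.
have : (v : nat)%:R <= (beta v : nat)%:R :> rat.
  by rewrite ler_nat (leq_trans (leq_ord v) ge_x).
have := mulr_ge0 (ler0n rat v) (win_ge0 m beta 0).
lra.
Qed.

(* With at least two opponents, the two highest values never tie: a tie
   at the top would leave the highest value with a probability of losing
   too large to be optimal. *)
Lemma top_two_bids_differ :
  (2 <= m)%N -> (3 <= x)%N -> (beta (inord x) : nat) != beta (inord x.-1).
Proof.
move=> m_ge2 x_ge3; set top : 'I_x.+1 := inord x; set sec : 'I_x.+1 := inord x.-1.
apply/negP => /eqP tie.
set K := #|[pred u | (beta u : nat) != beta top]|.
have top_val : (top : nat) = x by rewrite inordK.
have top_ne_sec : top != sec.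
  by apply/eqP => /(congr1 val); rewrite /= !inordK ?ltnS ?leq_pred //; lia.
have K_lt : (K < x)%N := card_other_bids (f := fun u => beta u : nat) top_ne_sec tie.
have sure := top_bidder (fun u => bid_below (leqnn x) (leq_ord u)).
rewrite top_val in sure.
(* [p]: chance that one opponent bids below the tie; [q = (x-1)/(x+1)] bounds it. *)
set p := K%:R * unif x; set q := (x%:R - 1) * unif x.
have u_gt0 := unif_gt0 x.
have p_ge0 : 0 <= p by rewrite mulr_ge0 ?ler0n ?ltW.
have p_le_q : p <= q.
  apply: ler_wpM2r; first exact: ltW.
  have : (K.+1)%:R <= x%:R :> rat by rewrite ler_nat.
  rewrite -natr1; lra.
have q_lt1 : q < 1 by rewrite /q mulrBl mul1r; have := value_unif_lt1 (leqnn x); lra.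
have pm_le_q2 : p ^+ m <= q ^+ 2.
  apply: le_trans (ler_wiXn2l p_ge0 _ m_ge2) _; first by lra.
  by rewrite !expr2 ler_pM.
have : 1 - q ^+ 2 <= 2 * (1 - win (beta top)) by have := win_tie m beta (beta top); lra.
move=> /(ler_wpM2l (ler0n rat x)) lose.
apply: (top_tie_arith (X := x%:R) (u := unif x)).
- by rewrite (ler_nat _ 3).
- by rewrite natr1 mulVf ?pnatr_eq0.
- by apply: le_trans lose _; rewrite mulrCA; lra.
Qed.

(* Second inequality of the theorem: the highest value bids at most one
   more than the second highest, otherwise it could undercut by one. *)
Lemma top_gap_le1 :
  (m <= 2)%N -> (beta (inord x) <= beta (inord x.-1) + 1)%N.
Proof.
move=> m_le2; rewrite leqNgt; apply/negP => gap.
set top : 'I_x.+1 := inord x; move: gap; rewrite -/top => gap.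
set b := (beta top).-1.
have bid_top : (beta top : nat) = b.+1 by rewrite prednK // (leq_ltn_trans _ gap).
have low : forall u, u != top -> (beta u < b)%N.
  move=> u u_ne; have := bid_below (leq_pred x) (ord_le_pred (leqnn x) (leq_ord u) u_ne).
  by move: gap; rewrite bid_top; lia.
have no_b : forall u, (beta u : nat) != b.
  move=> u; case: (eqVneq u top) => [->|/low /ltn_eqF -> //].
  by rewrite bid_top gtn_eqF.
have few : (#|[pred u | (beta u : nat) == b.+1]| <= 1)%N.
  rewrite -(cards1 top); apply: subset_leq_card; apply/subsetP => u.
  rewrite !inE; apply: contraLR => /low; lia.
by apply: (undercut bid_top no_b); move: m_le2 few; clear; nia.
Qed.

(* Only the two highest values can bid
   [beta (x-1)], and with two opponents they do not tie, so undercutting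
   by one would again be profitable. *)
Lemma second_gap_le1 :
  (m <= 2)%N -> (3 <= x)%N -> (beta (inord x.-1) <= beta (inord x.-2) + 1)%N.
Proof.
move=> m_le2 x_ge3; rewrite leqNgt; apply/negP => gap.
set top : 'I_x.+1 := inord x; set sec : 'I_x.+1 := inord x.-1.
move: gap; rewrite -/sec => gap; set b := (beta sec).-1.
have bid_sec : (beta sec : nat) = b.+1 by rewrite prednK // (leq_ltn_trans _ gap).
have bid_top : (b.+1 <= beta top)%N.
  by rewrite -bid_sec; apply: beta_mono; rewrite !inordK ?ltnS ?leq_pred.
have low : forall u, u != top -> u != sec -> (beta u < b)%N.
  move=> u u_ne_top u_ne_sec.
  have u_le := ord_le_pred (leq_pred x) (ord_le_pred (leqnn x) (leq_ord u) u_ne_top) u_ne_sec.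
  have := bid_below (leq_trans (leq_pred _) (leq_pred x)) u_le.
  by move: gap; rewrite bid_sec; lia.
have no_b : forall u, (beta u : nat) != b.
  move=> u; case: (eqVneq u top) => [->|u_ne_top]; first by rewrite gtn_eqF.
  case: (eqVneq u sec) => [->|/(low _ u_ne_top) /ltn_eqF -> //].
  by rewrite bid_sec gtn_eqF.
have only_top_two : forall u, (beta u : nat) == b.+1 -> (u == top) || (u == sec).
  move=> u; apply: contraLR; rewrite negb_or => /andP [u_ne_top u_ne_sec].
  by have := low u u_ne_top u_ne_sec; lia.
apply: (undercut bid_sec no_b); case: (leqP m 1) => [m_le1 | m_gt1].
  have : (#|[pred u | (beta u : nat) == b.+1]| <= 2)%N.
    apply: leq_trans (_ : #|[set top; sec]| <= 2)%N; last by rewrite cards2; case: (_ != _).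
    by apply: subset_leq_card; apply/subsetP => u; rewrite !inE => /only_top_two.
  by move: m_le1; clear; nia.
have : (#|[pred u | (beta u : nat) == b.+1]| <= 1)%N.
  rewrite -(cards1 sec); apply: subset_leq_card; apply/subsetP => u; rewrite !inE.
  move=> /[dup] /only_top_two /orP [/eqP u_top|//]; rewrite u_top -bid_sec.
  by have := top_two_bids_differ m_gt1 x_ge3; rewrite -/top -/sec => /negbTE ->.
by move: m_le2; clear; nia.
Qed.

End Equilibrium.

Local Close Scope ring_scope.

Theorem mainTheorem16 (n x : nat) (beta : bidfun x) :
  (n = 2 \/ n = 3)%N -> (10 <= x)%N ->
  symmetric_equilibrium n beta ->
  ((beta (inord x.-1) : nat) <= (beta (inord x.-2) : nat) + 1)%N /\
  ((beta (inord x) : nat) <= (beta (inord x.-1) : nat) + 1)%N.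
Proof.
move=> n_23 x_ge10 [beta_br _].
have m_le2 : (n.-1 <= 2)%N by case: n_23 => ->.
split; first exact: second_gap_le1 beta_br m_le2 (leq_trans _ x_ge10).
exact: top_gap_le1 beta_br m_le2.
Qed.
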